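(* There exist instances of the multi-agent contract model (described in the context) with subadditive reward functions and $n$ agents whose price of equality is $\Omega(\sqrt{n})$.
   Context: Model: principal and agents $A=[n]$; each agent $i$ has a finite action set $T_i$ (pairwise disjoint), $T=\bigsqcup_iT_i$, costs $c_j\ge0$, $c(S_i)=\sum_{j\in S_i}c_j$. Reward $f:2^T\to[0,1]$ monotone, $f(\emptyset)=0$; $f$ is subadditive if $f(S)+f(S')\ge f(S\cup S')$. Contract $\boldsymbol{\alpha}\in[0,1]^A$; agent $i$'s utility $\alpha_if(S)-c(S\cap T_i)$; $S\in\mathsf{NE}(\boldsymbol{\alpha})$ (pure Nash equilibrium) if no agent can gain by changing her own subset of actions. Principal's utility $(1-\sum_i\alpha_i)f(S)$. A contract is equal-pay if all its nonzero entries are equal. The price of equality of an instance is $\dfrac{\max_{\boldsymbol{\alpha},\,S\in\mathsf{NE}(\boldsymbol{\alpha})}(1-\sum_i\alpha_i)f(S)}{\max_{\boldsymbol{\alpha}\text{ equal-pay},\,S\in\mathsf{NE}(\boldsymbol{\alpha})}(1-\sum_i\alpha_i)f(S)}$. *)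

From mathcomp Require Import all_boot all_order all_algebra.
From mathcomp Require Export reals.
Set Implicit Arguments. Unset Strict Implicit. Unset Printing Implicit Defensive.
Import Order.TTheory GRing.Theory Num.Theory.
Local Open Scope ring_scope.

(* Agents are 'I_n; the action set T is a finite
   type and [own j] is the agent owning action j, so T_i = {j | own j = i}
   (pairwise disjoint, T = disjoint union of the T_i). *)
Section Model.
Variables (R : realFieldType) (n : nat) (T : finType).
Variables (own : T -> 'I_n) (c : T -> R) (f : {set T} -> R).

Definition costs_nonneg := forall j, 0 <= c j.

Definition cost (S : {set T}) : R := \sum_(j in S) c j.

Definition agent_part (i : 'I_n) (S : {set T}) : {set T} :=
  [set j in S | own j == i].

Definition reward_fun :=
  [/\ f set0 = 0,
      (forall S, 0 <= f S <= 1) &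
      (forall S S' : {set T}, S \subset S' -> f S <= f S')].

Definition subadditive :=
  forall S S' : {set T}, f (S :|: S') <= f S + f S'.

Definition is_contract (a : 'I_n -> R) := forall i, 0 <= a i <= 1.

Definition equal_pay (a : 'I_n -> R) :=
  forall i k, a i != 0 -> a k != 0 -> a i = a k.

Definition agent_utility (a : 'I_n -> R) (i : 'I_n) (S : {set T}) : R :=
  a i * f S - cost (agent_part i S).

Definition is_NE (a : 'I_n -> R) (S : {set T}) :=
  forall (i : 'I_n) (S' : {set T}),
    (forall j, own j != i -> (j \in S') = (j \in S)) ->
    agent_utility a i S' <= agent_utility a i S.

Definition principal_utility (a : 'I_n -> R) (S : {set T}) : R :=
  (1 - \sum_(i < n) a i) * f S.

End Model.

(* Agent 0 and m regular agents each own a single action.  A nonempty set of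
   actions is worth lam + mu * (number of regular agents in it), plus a bonus
   lam when everybody works, where lam = 1/(m+2) and mu = lam/sqrt m.  Paying
   agent 0 a quarter and each regular agent 1/(2m) sustains full participation
   and leaves the principal lam (2 + sqrt m)/4.  Under an equal-pay contract,
   full participation forces every share up to agent 0's 1/4, so the shares
   sum past 1; otherwise each working regular agent needs a share of at least
   1/(2 sqrt m), so more than 2 sqrt m of them cannot work without the shares
   summing past 1, and the reward is at most 4 lam.  The two utilities thus
   differ by a factor of order sqrt m. *)

From mathcomp Require Import all_boot all_order all_algebra.
From mathcomp Require Import reals.
From mathcomp Require Import ring lra.
Set Implicit Arguments.
Unset Strict Implicit.
Unset Printing Implicit Defensive.
Import Order.TTheory GRing.Theory Num.Theory.
Local Open Scope ring_scope.

Lemma sumr_ge_card (R : numDomainType) (I : finType) (A : {set I}) (b : I -> R) x :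
  (forall i, 0 <= b i) -> (forall i, i \in A -> x <= b i) ->
  x * #|A|%:R <= \sum_i b i.
Proof.
move=> b_ge0 xb; rewrite mulr_natr -sumr_const.
apply: le_trans (ler_sum _ xb) _.
by rewrite [leRHS](bigID [in A]) lerDl sumr_ge0.
Qed.

Section Equilibrium.
Variables (R : realFieldType) (n : nat) (T : finType).
Variables (own : T -> 'I_n) (c : T -> R) (f : {set T} -> R).

Lemma cost_setD1 (A : {set T}) j : j \in A -> cost c A = c j + cost c (A :\ j).
Proof.
move=> jA; rewrite /cost (bigD1 j) //=; congr (_ + _).
by apply: eq_bigl => k; rewrite !inE andbC.
Qed.

Lemma agent_part_setD1 i (S : {set T}) j :
  agent_part own i (S :\ j) = agent_part own i S :\ j.
Proof. by apply/setP => k; rewrite !inE andbA. Qed.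

Lemma is_NE_setD1 a S j : is_NE own c f a S -> j \in S ->
  c j <= a (own j) * (f S - f (S :\ j)).
Proof.
move=> NE jS; have jP : j \in agent_part own (own j) S by rewrite !inE jS eqxx.
have /NE : forall k, own k != own j -> (k \in S :\ j) = (k \in S).
  by move=> k; rewrite !inE; case: (k =P j) => [->|//]; rewrite eqxx.
rewrite /agent_utility agent_part_setD1 (cost_setD1 jP) mulrBr; lra.
Qed.

Lemma principal_utility_le (a : 'I_n -> R) S :
  (forall i, 0 <= a i) -> 0 <= f S -> principal_utility f a S <= f S.
Proof.
move=> a_ge0 fS; rewrite /principal_utility ler_piMl // lerBlDr lerDl.
exact: sumr_ge0.
Qed.

Lemma principal_utility_le0 (a : 'I_n -> R) S :
  1 <= \sum_i a i -> 0 <= f S -> principal_utility f a S <= 0.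
Proof. by move=> a1 fS; rewrite /principal_utility mulr_le0_ge0 // subr_le0. Qed.

End Equilibrium.

Section SingleAction.
Variables (R : realFieldType) (n : nat) (c : 'I_n -> R) (f : {set 'I_n} -> R).

Lemma cost_agent_part_id i S :
  cost c (agent_part (fun j => j) i S) = if i \in S then c i else 0.
Proof.
rewrite /cost; case: ifP => iS.
  by rewrite (big_pred1 i) // => j; rewrite !inE andbC; case: eqP => // ->.
by rewrite big_pred0 // => j; rewrite !inE andbC; case: eqP => // ->.
Qed.

Lemma is_NE_setT_id a : (forall i, c i <= a i * (f setT - f (setT :\ i))) ->
  is_NE (fun j => j) c f a setT.
Proof.
move=> drop i S' S'E; rewrite /agent_utility !cost_agent_part_id in_setT.
have S'j j : j != i -> j \in S' by move=> /S'E ->; rewrite in_setT.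
case: (boolP (i \in S')) => iS'.
  have -> : S' = setT.
    by apply/setP => j; rewrite in_setT; case: (j =P i) => [->|/eqP /S'j].
  by rewrite lexx.
have -> : S' = setT :\ i.
  apply/setP => j; rewrite !inE andbT.
  by case: (j =P i) => [->|/eqP ji]; [exact: negbTE | rewrite S'j].
have := drop i; lra.
Qed.

End SingleAction.

Section Construction.
Variables (R : realType) (m : nat).
Hypothesis m_gt0 : (0 < m)%N.
Implicit Types S A B : {set 'I_m.+1}.

Definition nreg (S : {set 'I_m.+1}) : nat := #|S :\ ord0|.

Definition lam : R := (m%:R + 2)^-1.
Definition sqm : R := Num.sqrt m%:R.
Definition mu : R := lam / sqm.

Definition reward (S : {set 'I_m.+1}) : R :=
  if S == set0 then 0
  else lam + mu * (nreg S)%:R + (if S == setT then lam else 0).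

Definition act_cost (j : 'I_m.+1) : R :=
  if j == ord0 then lam / 4 else (lam + mu) / (2 * m%:R).

Definition pay (j : 'I_m.+1) : R :=
  if j == ord0 then 1 / 4 else (2 * m%:R)^-1.

Lemma m_ge1 : 1 <= m%:R :> R. Proof. by rewrite ler1n. Qed.

Lemma sqm_sq : sqm ^+ 2 = m%:R.
Proof. by rewrite sqr_sqrtr // ler0n. Qed.

Lemma sqm_ge1 : 1 <= sqm.
Proof. by rewrite -sqrtr1 ler_sqrt // m_ge1. Qed.

Lemma sqm_le_m : sqm <= m%:R.
Proof. by rewrite -sqm_sq expr2; have := sqm_ge1; nra. Qed.

Lemma lam_gt0 : 0 < lam.
Proof. by rewrite invr_gt0; have := m_ge1; lra. Qed.

Lemma lam_bound : lam * (2 + sqm) <= 1.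
Proof.
rewrite mulrC ler_pdivrMr; last by have := m_ge1; lra.
by have := sqm_le_m; lra.
Qed.

Lemma mu_gt0 : 0 < mu.
Proof. by rewrite divr_gt0 ?lam_gt0 // (lt_le_trans ltr01 sqm_ge1). Qed.

Lemma mu_sqm : mu * sqm = lam.
Proof. by rewrite divfK // gt_eqF // (lt_le_trans ltr01 sqm_ge1). Qed.

Lemma mu_m : mu * m%:R = lam * sqm.
Proof. by rewrite -sqm_sq expr2 mulrA mu_sqm. Qed.

Lemma nreg_setT : nreg setT = m.
Proof.
by have := cardsD1 ord0 [set: 'I_m.+1]; rewrite cardsT card_ord in_setT; case.
Qed.

Lemma nreg_le S : (nreg S <= m)%N.
Proof. by rewrite -nreg_setT subset_leq_card // setSD // subsetT. Qed.

Lemma nreg_subset A B : A \subset B -> (nreg A <= nreg B)%N.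
Proof. by move=> AB; rewrite subset_leq_card // setSD. Qed.

Lemma nreg_setU A B : (nreg (A :|: B) <= nreg A + nreg B)%N.
Proof. by rewrite /nreg setDUl leq_card_setU. Qed.

Lemma nreg_setD1_ord0 S : nreg (S :\ ord0) = nreg S.
Proof. by rewrite /nreg setDDl setUid. Qed.

Lemma nreg_setD1 S i : i != ord0 -> i \in S -> nreg S = (nreg (S :\ i)).+1.
Proof.
move=> i0 iS; rewrite /nreg (cardsD1 i (S :\ ord0)) !inE i0 iS /= add1n.
by rewrite !setDDl setUC.
Qed.

Lemma reward0 : reward set0 = 0.
Proof. by rewrite /reward eqxx. Qed.

Lemma reward_ge0 S : 0 <= reward S.
Proof.
rewrite /reward; case: ifP => // _.
have := lam_gt0; have := mu_gt0; have : 0 <= (nreg S)%:R :> R by [].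
case: ifP => _; nra.
Qed.

Lemma reward_le S : reward S <= 2 * lam + mu * (nreg S)%:R.
Proof.
have := lam_gt0; have := mu_gt0; have : 0 <= (nreg S)%:R :> R by [].
by rewrite /reward; case: ifP => _; [|case: ifP => _]; nra.
Qed.

Lemma reward_ge S : S != set0 -> lam + mu * (nreg S)%:R <= reward S.
Proof.
by move=> /negbTE S0; rewrite /reward S0; case: ifP => _; have := lam_gt0; lra.
Qed.

Lemma reward_le1 S : reward S <= 1.
Proof.
apply: le_trans (reward_le S) _.
have : (nreg S)%:R <= m%:R :> R by rewrite ler_nat nreg_le.
by have := mu_m; have := lam_bound; have := mu_gt0; nra.
Qed.

Lemma reward_mono A B : A \subset B -> reward A <= reward B.
Proof.
move=> AB; have [->|A0] := eqVneq A set0; first by rewrite reward0 reward_ge0.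
have B0 : B != set0 by apply: contraNneq A0 => B0; rewrite -subset0 -B0.
have : mu * (nreg A)%:R <= mu * (nreg B)%:R.
  by rewrite ler_pM2l ?mu_gt0 // ler_nat nreg_subset.
rewrite /reward (negbTE A0) (negbTE B0).
have [AT|] := eqVneq A setT.
  have -> : B = setT by apply/eqP; rewrite eqEsubset subsetT -AT.
  by rewrite AT eqxx; lra.
by case: ifP => _; have := lam_gt0; lra.
Qed.

Lemma reward_subadditive A B : reward (A :|: B) <= reward A + reward B.
Proof.
have [->|A0] := eqVneq A set0; first by rewrite set0U reward0 add0r.
have [->|B0] := eqVneq B set0; first by rewrite setU0 reward0 addr0.
have : mu * (nreg (A :|: B))%:R <= mu * (nreg A)%:R + mu * (nreg B)%:R.
  by rewrite -mulrDr -natrD ler_pM2l ?mu_gt0 // ler_nat nreg_setU.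
by have := reward_le (A :|: B); have := reward_ge A0; have := reward_ge B0; lra.
Qed.

Lemma reward_setT : reward setT = 2 * lam + mu * m%:R.
Proof.
rewrite /reward eqxx nreg_setT.
by case: eqP => [/setP/(_ ord0)|]; rewrite ?inE //; lra.
Qed.

Lemma setD1_neqT S i : S :\ i != setT.
Proof. by apply/eqP => /setP/(_ i); rewrite !inE eqxx. Qed.

Lemma reward_setD1 S i : i != ord0 -> i \in S -> S :\ i != set0 ->
  reward S = reward (S :\ i) + mu + (if S == setT then lam else 0).
Proof.
move=> i0 iS Si0; have S0 : S != set0 by apply/set0Pn; exists i.
rewrite /reward (negbTE S0) (negbTE Si0) (negbTE (setD1_neqT S i)).
by rewrite (nreg_setD1 i0 iS) -natr1; lra.
Qed.

Lemma reward_setD1_ord0 : reward setT = reward (setT :\ ord0) + lam.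
Proof.
have T0 : setT :\ ord0 != set0 :> {set 'I_m.+1}.
  by apply/set0Pn; exists ord_max; rewrite !inE andbT -val_eqE /= -lt0n.
rewrite /reward (negbTE T0) (negbTE (setD1_neqT _ _)) nreg_setD1_ord0.
by case: eqP => [/setP/(_ ord0)|]; rewrite ?inE // eqxx; lra.
Qed.

Lemma act_cost_gt0 i : 0 < act_cost i.
Proof.
have := lam_gt0; have := mu_gt0; have := m_ge1.
by rewrite /act_cost; case: ifP => _ *; [lra | apply: divr_gt0; lra].
Qed.

Lemma pay_contract : is_contract pay.
Proof.
move=> i; apply/andP; have := m_ge1; rewrite /pay; case: ifP => _ m1; first lra.
by rewrite invr_ge0 invf_le1; lra.
Qed.

Lemma sum_pay : \sum_i pay i = 3 / 4.
Proof.
rewrite big_ord_recl (eq_bigr (fun _ => (2 * m%:R)^-1)); last first.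
  by move=> i _; rewrite /pay eq_sym (negbTE (neq_lift _ _)).
by rewrite sumr_const card_ord /pay eqxx -mulr_natr; field; have := m_ge1; lra.
Qed.

Lemma pay_NE : is_NE (fun j => j) act_cost reward pay setT.
Proof.
apply: is_NE_setT_id => i; rewrite /act_cost /pay.
have [->|i0] := eqVneq i ord0; first by rewrite reward_setD1_ord0; lra.
have Ti0 : setT :\ i != set0 by apply/set0Pn; exists ord0; rewrite !inE eq_sym i0.
rewrite (reward_setD1 i0 (in_setT i) Ti0) eqxx.
by rewrite le_eqVlt; apply/orP; left; apply/eqP; field; have := m_ge1; lra.
Qed.

Lemma principal_utility_pay :
  principal_utility reward pay setT = lam * (2 + sqm) / 4.
Proof. by rewrite /principal_utility sum_pay reward_setT mu_m; field. Qed.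

Lemma act_cost_ge i : i != ord0 -> mu / (2 * sqm) <= act_cost i.
Proof.
have sqm_gt0 : 0 < sqm by apply: lt_le_trans sqm_ge1.
move=> i0; rewrite /act_cost (negbTE i0) -mu_sqm -sqm_sq.
rewrite (_ : mu / (2 * sqm) = mu * sqm / (2 * sqm ^+ 2)); last by field; lra.
by rewrite ler_pM2r ?invr_gt0 ?mulr_gt0 ?exprn_gt0 // lerDl ltW ?mu_gt0.
Qed.

Lemma sqrt_succ_le : Num.sqrt m.+1%:R <= 2 * sqm :> R.
Proof.
have := sqrtr_ge0 m.+1%:R; have := sqr_sqrtr (ler0n R m.+1).
have := sqm_sq; have := sqm_ge1; have := m_ge1; rewrite -natr1; nra.
Qed.

Section EqualPay.
Variable b : 'I_m.+1 -> R.
Hypothesis b_contract : is_contract b.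

Let b_ge0 i : 0 <= b i. Proof. by case/andP: (b_contract i). Qed.

Lemma equal_pay_setT_overpay : (3 <= m)%N -> equal_pay b ->
  is_NE (fun j => j) act_cost reward b setT -> 1 <= \sum_i b i.
Proof.
move=> m3 b_eq NE; have drop i := is_NE_setD1 NE (in_setT i).
have b_neq0 i : b i != 0.
  by apply: contraTneq (drop i) => ->; rewrite mul0r -ltNge act_cost_gt0.
have b0 : 1 / 4 <= b ord0.
  have := drop ord0; rewrite /act_cost eqxx reward_setD1_ord0 addrAC subrr add0r.
  by have := lam_gt0; nra.
have /(sumr_ge_card b_ge0) : forall i, i \in setT -> 1 / 4 <= b i.
  by move=> i _; rewrite -(b_eq _ _ (b_neq0 ord0) (b_neq0 i)).
have : 4 <= m.+1%:R :> R by rewrite ler_nat.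
by rewrite cardsT card_ord; lra.
Qed.

Lemma crowded_overpay S : S != setT -> 2 * sqm < (nreg S)%:R ->
  is_NE (fun j => j) act_cost reward b S -> 1 <= \sum_i b i.
Proof.
move=> ST crowded NE.
have sqm_gt0 : 0 < sqm by apply: lt_le_trans sqm_ge1.
have nS2 : (1 < nreg S)%N by rewrite -(ltr_nat R); have := sqm_ge1; lra.
have b_reg i : i \in S :\ ord0 -> (2 * sqm)^-1 <= b i.
  case/setD1P => i0 iS.
  have Si0 : S :\ i != set0.
    have : (0 < nreg (S :\ i))%N by rewrite -ltnS -(nreg_setD1 i0 iS).
    by case/card_gt0P => x /setD1P [_ xS]; apply/set0Pn; exists x.
  have := le_trans (act_cost_ge i0) (is_NE_setD1 NE iS).
  rewrite (reward_setD1 i0 iS Si0) (negbTE ST) addr0 addrAC subrr add0r.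
  by rewrite [b i * _]mulrC ler_pM2l ?mu_gt0.
have := sumr_ge_card b_ge0 b_reg; rewrite -/(nreg S).
rewrite (_ : (2 * sqm)^-1 * _ = (nreg S)%:R / (2 * sqm)); last by rewrite mulrC.
by rewrite ler_pdivrMr ?mulr_gt0 //; nra.
Qed.

Lemma principal_utility_equal_pay S : (3 <= m)%N -> equal_pay b ->
  is_NE (fun j => j) act_cost reward b S ->
  principal_utility reward b S <= 4 * lam.
Proof.
move=> m3 b_eq NE.
suff [small|overpaid] : reward S <= 4 * lam \/ 1 <= \sum_i b i.
- exact: le_trans (principal_utility_le b_ge0 (reward_ge0 S)) small.
- apply: le_trans (principal_utility_le0 overpaid (reward_ge0 S)) _.
  by have := lam_gt0; lra.
have [ST|ST] := eqVneq S setT.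
  by right; move: NE; rewrite ST; exact: equal_pay_setT_overpay.
have [crowded|sparse] := ltrP (2 * sqm) (nreg S)%:R.
  by right; exact: crowded_overpay crowded NE.
by left; have := reward_le S; have := mu_sqm; have := mu_gt0; nra.
Qed.

End EqualPay.

End Construction.

Theorem proposition5p9 (R : realType) :
  exists C : R, 0 < C /\
  exists N : nat, forall n : nat, (N <= n)%N ->
  exists (T : finType) (own : T -> 'I_n) (c : T -> R) (f : {set T} -> R),
    [/\ costs_nonneg c, reward_fun f, subadditive f &
    exists (a : 'I_n -> R) (S : {set T}),
      [/\ is_contract a, is_NE own c f a S,
          0 < principal_utility f a S &
          forall (b : 'I_n -> R) (S' : {set T}),
            is_contract b -> equal_pay b -> is_NE own c f b S' ->
            C * Num.sqrt (n%:R) * principal_utility f b S'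
              <= principal_utility f a S]].
Proof.
exists (1 / 32); split; first lra.
exists 4%N => -[//|m] m3; have m_gt0 : (0 < m)%N by case: m m3.
exists 'I_m.+1, (fun j => j), (@act_cost R m), (@reward R m); split.
- by move=> j; exact/ltW/act_cost_gt0.
- split; [exact: reward0 | | exact: reward_mono].
  by move=> S; apply/andP; split; [exact: reward_ge0 | exact: reward_le1].
- exact: reward_subadditive.
exists (@pay R m), setT; split.
- exact: pay_contract.
- exact: pay_NE.
- rewrite principal_utility_pay // divr_gt0 // mulr_gt0 ?lam_gt0 //.
  by have := sqm_ge1 R m_gt0; lra.
move=> b S' b_contract b_eq NE.
have := principal_utility_equal_pay m_gt0 b_contract m3 b_eq NE.
rewrite principal_utility_pay //.
have := sqrt_succ_le R m_gt0; have := sqrtr_ge0 (m.+1%:R : R).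
have := lam_gt0 R m_gt0; have := sqm_ge1 R m_gt0; nra.
Qed.
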